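(* In the Hidden Hallucination algorithm described in the context, fix a phase $\ell$ and let $\Pi\subseteq\Pi_{\mathrm{mkv}}$ be any subset of policies. Suppose that the hallucinated ledger $\lambda_{\mathrm{hal},\ell}$ and the phase length $N_{\mathrm{ph}}>0$ satisfy \[\frac{1}{N_{\mathrm{ph}}}\le\frac{\Pr_{\mathrm{can}}[\mathcal{E}_{\mathrm{pun},\ell}\mid\lambda_{\mathrm{cens},\ell}]\cdot \mathrm{gap}_{\mathrm{can}}[\Pi\mid\lambda_{\mathrm{hal},\ell}]}{3H}.\] Then for $k=k_\ell$, any Bayes-greedy policy $\pi_k$ of agent $k$ lies in $\Pi$.
   Context: MDPs. Fix positive integers $S,A,H$. An MDP model $\mu$ specifies for each triple $(x,a,h)\in[S]\times[A]\times[H]$ a reward distribution $R_\mu(x,a,h)$ on $[0,1]$ (all supported on a common countable set) with mean $r_\mu(x,a,h)$, transition distribution $p_\mu(\cdot\mid x,a,h)$ on $[S]$ and initial distribution $p_\mu(\cdot\mid0)$; an episode produces a trajectory $(x_h,a_h,r_h,h)_{h\in[H]}$ in the usual way. $\Pi_{\mathrm{mkv}}$ is the set of deterministic Markov policies $\pi:[S]\times[H]\to[A]$; $V(\pi,\mu)=\mathsf{E}^\pi_\mu[\sum_h r_\mu(x_h,a_h,h)]$. Incentivized RL. A prior $\mathbf{p}$ over models is known to all; $\mu_\star\sim\mathbf{p}$. In episode $k$ the principal chooses a signal $\sigma_k$ via a known algorithm; agent $k$ selects a Bayes-greedy policy $\pi_k\in\arg\max_{\pi\in\Pi_{\mathrm{mkv}}}\mathbb{E}[V(\pi,\mu_\star)\mid\sigma_k]$;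 $\pi_k$ is run in $\mu_\star$, producing trajectory $\tau_k$ seen by the principal. Ledgers and canonical posteriors. A ledger $\lambda$ consists of a censoring set $\mathcal{U}_\lambda$ of triples and a sequence $(\pi_i,\tau_i)_{i=1}^m$ of policies and trajectories with rewards removed at stages $h$ with $(x_h,a_h,h)\in\mathcal{U}_\lambda$. $\Pr_{\mathrm{can}}[\cdot\mid\lambda,\mathcal{E}]$ (expectation $\mathbb{E}_{\mathrm{can}}$) is the conditional law of $\mu_\star$ given $\{\hat\lambda=\lambda\}\cap\mathcal{E}$, where $\mu_\star\sim\mathbf{p}$ and $\hat\lambda$ is obtained by running the fixed (non-random) policies $\pi_1,\dots,\pi_m$ once each, independently, in $\mu_\star$ and censoring rewards on $\mathcal{U}_\lambda$. The canonical gap of $\Pi\subseteq\Pi_{\mathrm{mkv}}$ given $\lambda$ is $\mathrm{gap}_{\mathrm{can}}[\Pi\mid\lambda]:=\max_{\pi\in\Pi}\mathbb{E}_{\mathrm{can}}[V(\pi,\mu_\star)\mid\lambda]-\max_{\pi\in\Pi_{\mathrm{mkv}}\setminus\Pi}\mathbb{E}_{\mathrm{can}}[V(\pi,\mu_\star)\mid\lambda]$. Algorithm (Hidden Hallucination), inputs $N_{\mathrm{ph}},n_{\mathrm{lrn}},\varepsilon_{\mathrm{pun}}$. Phase $\ell$ = episodes $(\ell-1)N_{\mathrm{ph}}+1,\dots,\ell N_{\mathrm{ph}}$; hallucination episode $k_\ell$ uniform in the phase. $\mathcal{U}_\ell$ = triples visited in fewer than $n_{\mathrm{lrn}}$ of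 the episodes $k_1,\dots,k_{\ell-1}$ (others fully explored). $\lambda_{\mathrm{cens},\ell}$: pairs $(\pi_{k_j},\tau_{k_j})_{j<\ell}$, all rewards removed; $\lambda_{\mathrm{hon},\ell}$: same pairs with censoring set $\mathcal{U}_\ell$. Punish event $\mathcal{E}_{\mathrm{pun},\ell}=\{r_{\mu_\star}(x,a,h)\le\varepsilon_{\mathrm{pun}}\ \forall(x,a,h)\notin\mathcal{U}_\ell\}$. At $k=k_\ell$: draw $\mu_{\mathrm{hal},\ell}$ from the posterior of $\mu_\star$ given $\lambda_{\mathrm{cens},\ell}$ and $\mathcal{E}_{\mathrm{pun},\ell}$; $\lambda_{\mathrm{hal},\ell}$ has censoring set $\mathcal{U}_\ell$ and each occurrence of a fully explored triple $(x,a,h)$ gets an independent reward from $R_{\mu_{\mathrm{hal},\ell}}(x,a,h)$. Signal: $\lambda_{\mathrm{hal},\ell}$ at $k=k_\ell$, $\lambda_{\mathrm{hon},\ell}$ at the other episodes of phase $\ell$. *)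

From HB Require Import structures.
From mathcomp Require Import all_boot all_order all_algebra.
From mathcomp Require Import all_classical all_reals all_analysis.
Set Implicit Arguments. Unset Strict Implicit. Unset Printing Implicit Defensive.
Import Order.TTheory GRing.Theory Num.Theory.
Local Open Scope ring_scope.
Local Open Scope classical_set_scope.

Section MDP.
Variables (R : realType) (S A H : nat).

Definition triple := ('I_S * 'I_A * 'I_H)%type.

Definition policy := {ffun 'I_S * 'I_H -> 'I_A}.

(* An MDP model: reward distributions (probability mass functions on R,
   supported on a common countable set C, see [valid_mdp]), transition
   distributions p(.|x,a,h) and the initial distribution p(.|0). *)
Record mdp := MDP {
  rewd  : 'I_S -> 'I_A -> 'I_H -> R -> R;
  trans : 'I_S -> 'I_A -> 'I_H -> 'I_S -> R;
  init  : 'I_S -> R }.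

Definition valid_mdp (C : set R) (m : mdp) : Prop :=
  [/\ (forall x a h r, 0 <= rewd m x a h r),
      (forall x a h r, ~ C r -> rewd m x a h r = 0),
      (forall x a h, (\esum_(r in C) (rewd m x a h r)%:E = 1)%E),
      (forall x a h y, 0 <= trans m x a h y) /\
        (forall x a h, \sum_(y : 'I_S) trans m x a h y = 1) &
      (forall x, 0 <= init m x) /\ \sum_(x : 'I_S) init m x = 1].

Definition rmean (C : set R) (m : mdp) x a h : R :=
  fine (\esum_(r in C) (rewd m x a h r * r)%:E)%E.

(* one stage of a recorded trajectory: (x_h, a_h, r_h) with r_h = None when
   the reward is removed (censored); the stage is the index h. *)
Definition step := ('I_S * 'I_A * option R)%type.
Definition traj := {ffun 'I_H -> step}.
Definition saTraj := {ffun 'I_H -> 'I_S * 'I_A}.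
Definition saOf (t : traj) : saTraj := [ffun h => (t h).1].

Definition initF (m : mdp) (sa : saTraj) : R :=
  if (insub 0%N : option 'I_H) is Some h0 then init m (sa h0).1 else 1.
Definition saLik (m : mdp) (pi : policy) (sa : saTraj) : R :=
  initF m sa * \prod_(h : 'I_H)
    ((pi ((sa h).1, h) == (sa h).2)%:R *
     (if (insub h.+1 : option 'I_H) is Some h' then
        trans m (sa h).1 (sa h).2 h (sa h').1 else 1)).

Definition rewE (m : mdp) (t : traj) : R :=
  \prod_(h : 'I_H)
    (if (t h).2 is Some r then rewd m (t h).1.1 (t h).1.2 h r else 1).

Definition value (C : set R) (m : mdp) (pi : policy) : R :=
  \sum_(xs : {ffun 'I_H -> 'I_S})
    saLik m pi [ffun h => (xs h, pi (xs h, h))] *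
    \sum_(h : 'I_H) rmean C m (xs h) (pi (xs h, h)) h.

(* Ledgers: a censoring set and a sequence of (policy, trajectory) pairs. *)
Definition ledger := ({set triple} * seq (policy * traj))%type.
Definition lU (l : ledger) : {set triple} := l.1.
Definition lent (l : ledger) : seq (policy * traj) := l.2.

Definition wf (l : ledger) : bool :=
  all (fun e : policy * traj =>
         [forall h : 'I_H, (((e.2 h).2 == None) ==
                            (((e.2 h).1.1, (e.2 h).1.2, h) \in lU l))])
      (lent l).

(* canonical likelihood Pr[hat lambda = l | mu_star = m] when the fixed
   policies of l are run once each, independently, and rewards censored on lU *)
Definition ledLik (m : mdp) (l : ledger) : R :=
  (wf l)%:R * \prod_(e <- lent l) (saLik m e.1 (saOf e.2) * rewE m e.2).

Definition hist := seq (policy * saTraj).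
Definition histOf (l : ledger) : hist := [seq (e.1, saOf e.2) | e <- lent l].

Definition censOf (hs : hist) : ledger :=
  (setTfor triple, [seq (e.1, [ffun h => (e.2 h, None)] : traj) | e : policy * saTraj <- hs]).

Definition visits (e : policy * saTraj) (t : triple) : bool :=
  [exists h : 'I_H, (h == t.2) && (e.2 h == (t.1.1, t.1.2))].

End MDP.

Section Canonical.
Variables (R : realType) (S A H : nat).
Variables (d : measure_display) (M : measurableType d) (P : probability M R).
Variables (C : set R) (mdl : M -> mdp R S A H).

Definition mdl_measurable : Prop :=
  [/\ (forall x a h r, measurable_fun setT (fun m => rewd (mdl m) x a h r)),
      (forall x a h y, measurable_fun setT (fun m => trans (mdl m) x a h y)) &
      (forall x, measurable_fun setT (fun m => init (mdl m) x))].

Definition Vm (pi : policy S A H) (m : M) : R := value C (mdl m) pi.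

Definition canE (f : M -> R) (E : set M) (l : ledger R S A H) : R :=
  fine (\int[P]_(m in E) (f m * ledLik (mdl m) l)%:E)%E /
  fine (\int[P]_(m in E) (ledLik (mdl m) l)%:E)%E.

Definition canPr (E : set M) (l : ledger R S A H) : R :=
  fine (\int[P]_(m in E) (ledLik (mdl m) l)%:E)%E /
  fine (\int[P]_(m in setT) (ledLik (mdl m) l)%:E)%E.

(* gap_can[Pi | l]; maxima over an empty set are -oo *)
Definition gap_can (Pi : {set policy S A H}) (l : ledger R S A H) : \bar R :=
  (\big[maxe/-oo]_(pi in Pi) (canE (Vm pi) setT l)%:E -
   \big[maxe/-oo]_(pi in ~: Pi) (canE (Vm pi) setT l)%:E)%E.

Variables (N nl : nat) (eps : R).

Definition phaseOf (k : nat) : nat := (k.-1 %/ N).+1.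

Definition Uset (hs : hist S A H) : {set triple S A H} :=
  [set t | (count (fun e => visits e t) hs < nl)%N].

Definition Epun (U : {set triple S A H}) : set M :=
  [set m | forall t, t \notin U -> rmean C (mdl m) t.1.1 t.1.2 t.2 <= eps].

(* Pr[lambda_hal = l | reward-free history hs of the previous hallucination
   episodes]: mu_hal ~ posterior given censOf hs and Epun, then every
   occurrence of an explored triple gets an independent reward from R_{mu_hal}. *)
Definition halP (hs : hist S A H) (l : ledger R S A H) : R :=
  ((histOf l == hs) && (lU l == Uset hs))%:R *
  (fine (\int[P]_(m in Epun (Uset hs)) (ledLik (mdl m) l)%:E)%E /
   fine (\int[P]_(m in Epun (Uset hs)) (ledLik (mdl m) (censOf R hs))%:E)%E).

(* agents' (possibly randomized) policy selection: sel k l pi is the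
   probability that agent k, receiving signal l, plays pi *)
Variable sel : nat -> ledger R S A H -> policy S A H -> R.

(* Pr[pi_{k_j} = pi | history before phase j]; k_j uniform in phase j *)
Definition chooseP (j : nat) (hs : hist S A H) (pi : policy S A H) : R :=
  N%:R^-1 * \sum_((j.-1 * N).+1 <= k < (j * N).+1)
     fine (\esum_(l in [set: ledger R S A H]) (halP hs l * sel k l pi)%:E)%E.

(* Pr[(pi_{k_j}, states/actions of tau_{k_j})_{j} = hs | mu_star = m] *)
Fixpoint histLikAux (m : M) (pre rest : hist S A H) : R :=
  match rest with
  | [::] => 1
  | e :: rest' => chooseP (size pre).+1 pre e.1 * saLik (mdl m) e.1 e.2 *
                  histLikAux m (rcons pre e) rest'
  end.
Definition histLik (m : M) (hs : hist S A H) : R := histLikAux m [::] hs.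

(* Pr[lambda_hon,l = lam | mu_star = m] *)
Definition honSigP (ph : nat) (lam : ledger R S A H) (m : M) : R :=
  ((size (lent lam) == ph.-1) && (lU lam == Uset (histOf lam)))%:R *
  histLik m (histOf lam) *
  ((wf lam)%:R * \prod_(e <- lent lam) rewE (mdl m) e.2).

(* Pr[lambda_hal,l = lam | mu_star = m] *)
Definition halSigP (ph : nat) (lam : ledger R S A H) (m : M) : R :=
  (size (lent lam) == ph.-1)%:R * histLik m (histOf lam) *
  halP (histOf lam) lam.

(* Pr[sigma_k = lam | mu_star = m] for an episode k of phase ph
   (k = k_ph with probability 1/N) *)
Definition sigLik (ph : nat) (lam : ledger R S A H) (m : M) : R :=
  (1 - N%:R^-1) * honSigP ph lam m + N%:R^-1 * halSigP ph lam m.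

Definition post (k : nat) (lam : ledger R S A H) (pi : policy S A H) : R :=
  fine (\int[P]_(m in setT) (Vm pi m * sigLik (phaseOf k) lam m)%:E)%E /
  fine (\int[P]_(m in setT) (sigLik (phaseOf k) lam m)%:E)%E.

Definition BG (k : nat) (lam : ledger R S A H) : {set policy S A H} :=
  [set pi | [forall pi', post k lam pi' <= post k lam pi]].

Definition bayes_greedy_sel : Prop :=
  [/\ (forall k l pi, 0 <= sel k l pi),
      (forall k l, \sum_(pi : policy S A H) sel k l pi = 1) &
      (forall k l pi, 0 < sel k l pi -> pi \in BG k l)].

End Canonical.

(* Given the signal lam, agent k's likelihood mixes the honest ledger (weight
   1 - 1/N) with the hallucinated one (weight 1/N).  Up to a common positive
   factor, the former is the likelihood of lam and the latter that of its
   censored version, rescaled by r = Pr[lam, E_pun] / Pr[lam_cens, E_pun].  So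
   the agent maximises (1 - 1/N) A(pi) + (1/N) r B(pi), where A and B are the
   unnormalised canonical values given lam and lam_cens.  If a Bayes-greedy pi
   lay outside Pi, comparing it with the best policy of Pi and using
   0 <= B <= H Pr[lam_cens] gives (1 - 1/N) p gap <= H/N with
   p = Pr_can[E_pun | lam_cens]; together with p gap <= H this yields
   p gap <= 2H/N, against the hypothesis p gap >= 3H/N. *)

From Pilot Require Import Defs.
From HB Require Import structures.
From mathcomp Require Import all_boot all_order all_algebra.
From mathcomp Require Import all_classical all_reals all_analysis.
From mathcomp Require Import measurable_realfun ring lra zify.
Import Order.TTheory GRing.Theory Num.Theory.
Local Open Scope ring_scope.
Local Open Scope classical_set_scope.

Set Implicit Arguments. Unset Strict Implicit. Unset Printing Implicit Defensive.

Lemma mulr_in0K (R : numDomainType) (x y K : R) :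
  0 <= x <= K -> 0 <= y <= 1 -> 0 <= x * y <= K.
Proof.
by move=> /andP[x0 xK] /andP[y0 y1]; rewrite mulr_ge0 //= -[K]mulr1 ler_pM.
Qed.

Lemma prodr_in01 (R : numDomainType) (I : Type) (r : seq I) (P : pred I)
    (F : I -> R) :
  (forall i, P i -> 0 <= F i <= 1) -> 0 <= \prod_(i <- r | P i) F i <= 1.
Proof.
move=> F01; apply: (big_ind (fun x => 0 <= x <= 1)) => //; first by rewrite ler01 lexx.
by move=> x y; exact: mulr_in0K.
Qed.

Lemma natr_in01 (R : numDomainType) (b : bool) : 0 <= (b%:R : R) <= 1.
Proof. by case: b; rewrite ?lexx ler01. Qed.

Lemma le1_of_sum1 (R : numDomainType) (T : finType) (F : T -> R) y :
  (forall x, 0 <= F x) -> \sum_x F x = 1 -> F y <= 1.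
Proof. by move=> F0 <-; rewrite (bigD1 y) //= lerDl sumr_ge0. Qed.

Lemma divr_in0K (R : realFieldType) (x z K : R) :
  0 <= K -> 0 <= z -> 0 <= x <= K * z -> 0 <= x / z <= K.
Proof.
move=> K0 z0 /andP[x0 xKz]; have [->|zn0] := eqVneq z 0; first by rewrite invr0 mulr0 lexx.
have zpos : 0 < z by rewrite lt_def zn0.
by rewrite divr_ge0 //= ler_pdivrMr.
Qed.

Section ValidMDP.
Variables (R : realType) (S A H : nat) (C : set R) (m : mdp R S A H).
Hypothesis hv : valid_mdp C m.

Lemma rewd_in01 x a h r : 0 <= rewd m x a h r <= 1.
Proof.
case: hv => r0 rC rs _ _; rewrite r0 /=.
have [Cr|nCr] := pselect (C r); last by rewrite rC.
rewrite -lee_fin -(rs x a h); apply: esum_ge; exists [set r].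
  by split; [exact: finite_set1 | move=> y ->].
by rewrite fsbig_set1.
Qed.

Lemma trans_in01 x a h y : 0 <= trans m x a h y <= 1.
Proof. by case: hv => _ _ _ [t0 t1] _; rewrite t0 le1_of_sum1. Qed.

Lemma initF_in01 sa : 0 <= initF m sa <= 1.
Proof.
rewrite /initF; case: insubP => [h0 _ _|_]; last by rewrite ler01 lexx.
by case: hv => _ _ _ _ [i0 i1]; rewrite i0 le1_of_sum1.
Qed.

Lemma saLik_in01 pi sa : 0 <= saLik m pi sa <= 1.
Proof.
apply: mulr_in0K; first exact: initF_in01.
apply: prodr_in01 => h _; apply: mulr_in0K; first exact: natr_in01.
by case: insubP => [h' _ _|_]; rewrite ?trans_in01 ?ler01 ?lexx.
Qed.

Lemma rewE_in01 t : 0 <= rewE m t <= 1.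
Proof.
by apply: prodr_in01 => h _; case: (t h).2 => [r|]; rewrite ?rewd_in01 ?ler01 ?lexx.
Qed.

Lemma ledLik_in01 l : 0 <= ledLik m l <= 1.
Proof.
apply: mulr_in0K; first exact: natr_in01.
by apply: prodr_in01 => e _; rewrite mulr_in0K ?saLik_in01 ?rewE_in01.
Qed.

Hypothesis hC01 : C `<=` [set r | 0 <= r <= 1].

Lemma rmean_in01 x a h : 0 <= rmean C m x a h <= 1.
Proof.
case: hv => r0 _ rs _ _; rewrite /rmean.
have e0 : (0 <= \esum_(r in C) (rewd m x a h r * r)%:E)%E.
  by apply: esum_ge0 => r /hC01 /andP[r_ge0 _]; rewrite lee_fin mulr_ge0.
have e1 : (\esum_(r in C) (rewd m x a h r * r)%:E <= 1)%E.
  rewrite -(rs x a h); apply: le_esum => r /hC01 /andP[r_ge0 r_le1].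
  by rewrite lee_fin ler_piMr.
rewrite fine_ge0 //= -lee_fin fineK //.
by rewrite ge0_fin_numE // (le_lt_trans e1) // ltry.
Qed.

End ValidMDP.

Section PathSums.
Variables (R : numDomainType) (T : finType).

Definition ffun_cons k (x : T) (ys : {ffun 'I_k -> T}) : {ffun 'I_k.+1 -> T} :=
  [ffun i => if unlift ord0 i is Some j then ys j else x].

Lemma ffun_cons0 k x (ys : {ffun 'I_k -> T}) : ffun_cons x ys ord0 = x.
Proof. by rewrite ffunE unlift_none. Qed.

Lemma ffun_consS k x (ys : {ffun 'I_k -> T}) j : ffun_cons x ys (lift ord0 j) = ys j.
Proof. by rewrite ffunE liftK. Qed.

Lemma sum_ffun_cons k (F : {ffun 'I_k.+1 -> T} -> R) :
  \sum_xs F xs = \sum_(x : T) \sum_(ys : {ffun 'I_k -> T}) F (ffun_cons x ys).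
Proof.
rewrite pair_big /= (reindex (fun p : T * {ffun 'I_k -> T} => ffun_cons p.1 p.2)) //.
exists (fun xs : {ffun 'I_k.+1 -> T} => (xs ord0, [ffun j : 'I_k => xs (lift ord0 j)])).
  move=> [x ys] _ /=; rewrite ffun_cons0.
  by congr pair; apply/ffunP => j; rewrite ffunE ffun_consS.
move=> xs _; apply/ffunP => i; rewrite ffunE.
by case: unliftP => [j ->|->] //; rewrite ffunE.
Qed.

Lemma sum_chain_paths k (a : T -> R) (Tr : 'I_k -> T -> T -> R) :
  (forall i x, \sum_y Tr i x y = 1) ->
  \sum_(xs : {ffun 'I_k.+1 -> T}) a (xs ord0) *
     \prod_(i < k) Tr i (xs (widen_ord (leqnSn k) i)) (xs (lift ord0 i))
  = \sum_x a x.
Proof.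
elim: k a Tr => [|k IH] a Tr Tr1.
  rewrite sum_ffun_cons; apply: eq_bigr => x _.
  under eq_bigr do rewrite big_ord0 mulr1 ffun_cons0.
  by rewrite big_const card_ffun !card_ord expn0 /= addr0.
have consE x (ys : {ffun 'I_k.+1 -> T}) :
  a (ffun_cons x ys ord0) * \prod_(i < k.+1) Tr i
     (ffun_cons x ys (widen_ord (leqnSn k.+1) i)) (ffun_cons x ys (lift ord0 i))
  = (a x * Tr ord0 x (ys ord0)) *
    \prod_(j < k) Tr (lift ord0 j) (ys (widen_ord (leqnSn k) j)) (ys (lift ord0 j)).
  rewrite big_ord_recl ffun_cons0 mulrA; congr (_ * _ * _).
    by rewrite (_ : widen_ord _ ord0 = ord0) ?ffun_cons0 ?ffun_consS //; apply: val_inj.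
  apply: eq_bigr => j _.
  rewrite (_ : widen_ord _ (lift ord0 j) = lift ord0 (widen_ord (leqnSn k) j)).
    by rewrite !ffun_consS.
  exact: val_inj.
rewrite sum_ffun_cons; under eq_bigr do under eq_bigr do rewrite consE.
rewrite exchange_big /=; under eq_bigr do rewrite -mulr_suml.
rewrite (IH (fun y => \sum_x a x * Tr ord0 x y) (fun j => Tr (lift ord0 j))) //.
by rewrite exchange_big /=; apply: eq_bigr => x _; rewrite -mulr_sumr Tr1 mulr1.
Qed.

End PathSums.

Lemma saLik_markov (R : realType) (S A k : nat) (m : mdp R S A k.+1)
    (pi : policy S A k.+1) (xs : {ffun 'I_k.+1 -> 'I_S}) :
  saLik m pi [ffun h => (xs h, pi (xs h, h))] =
  init m (xs ord0) * \prod_(i < k)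
    trans m (xs (widen_ord (leqnSn k) i))
      (pi (xs (widen_ord (leqnSn k) i), widen_ord (leqnSn k) i))
      (widen_ord (leqnSn k) i) (xs (lift ord0 i)).
Proof.
rewrite /saLik /initF; congr (_ * _).
  by case: insubP => [h0 _ h0v|] //=; rewrite ffunE (_ : h0 = ord0) //; apply: val_inj.
rewrite big_ord_recr /= ffunE /= eqxx mul1r.
case: insubP => [h' hlt _|_]; first by move: hlt; rewrite /= ltnn.
rewrite mulr1; apply: eq_bigr => i _; rewrite !ffunE eqxx mul1r /=.
case: insubP => [h' _ hv|]; last by rewrite /= ltnS ltn_ord.
by rewrite ffunE (_ : h' = lift ord0 i) //; apply: val_inj; rewrite hv /= /bump.
Qed.

Lemma sum_saLik_paths (R : realType) (S A H : nat) (C : set R) (m : mdp R S A H)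
    (pi : policy S A H) :
  valid_mdp C m -> (0 < H)%N ->
  \sum_(xs : {ffun 'I_H -> 'I_S}) saLik m pi [ffun h => (xs h, pi (xs h, h))] = 1.
Proof.
case: H m pi => // k m pi [_ _ _ [_ trans1] [_ init1]] _.
under eq_bigr do rewrite saLik_markov.
rewrite (@sum_chain_paths _ _ k (init m)
  (fun i x => trans m x (pi (x, widen_ord (leqnSn k) i)) (widen_ord (leqnSn k) i))) //.
Qed.

Lemma value_in0H (R : realType) (S A H : nat) (C : set R) (m : mdp R S A H)
    (pi : policy S A H) :
  valid_mdp C m -> C `<=` [set r | 0 <= r <= 1] -> (0 < H)%N ->
  0 <= value C m pi <= H%:R.
Proof.
move=> hv hC01 hH.
pose ret (xs : {ffun 'I_H -> 'I_S}) := \sum_h rmean C m (xs h) (pi (xs h, h)) h.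
have ret_in0H xs : 0 <= ret xs <= H%:R.
  rewrite sumr_ge0 => [|h _]; last by case/andP: (rmean_in01 hv hC01 (xs h) (pi (xs h, h)) h).
  rewrite -[H in _ <= H%:R]card_ord -sumr_const; apply: ler_sum => h _.
  by case/andP: (rmean_in01 hv hC01 (xs h) (pi (xs h, h)) h).
have lik_ge0 (xs : {ffun 'I_H -> 'I_S}) : 0 <= saLik m pi [ffun h => (xs h, pi (xs h, h))].
  by case/andP: (saLik_in01 hv pi [ffun h => (xs h, pi (xs h, h))]).
rewrite /value sumr_ge0 => [|xs _]; last by rewrite mulr_ge0 //; case/andP: (ret_in0H xs).
rewrite -[leRHS]mul1r -{1}(sum_saLik_paths pi hv hH) mulr_suml.
by apply: ler_sum => xs _; apply: ler_wpM2l => //; case/andP: (ret_in0H xs).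
Qed.

Section Measurability.
Variables (R : realType) (S A H : nat) (d : measure_display) (M : measurableType d).
Variables (C : set R) (mdl : M -> mdp R S A H).
Hypothesis hmeas : mdl_measurable mdl.

Lemma measurable_saLik pi sa : measurable_fun setT (fun m => saLik (mdl m) pi sa).
Proof.
case: hmeas => _ mt mi; apply: measurable_funM.
  by rewrite /initF; case: insubP => [h0 _ _|_]; [exact: mi|exact: measurable_cst].
apply: measurable_prod => h _; apply: measurable_funM; first exact: measurable_cst.
by case: insubP => [h' _ _|_]; [exact: mt|exact: measurable_cst].
Qed.

Lemma measurable_rewE t : measurable_fun setT (fun m => rewE (mdl m) t).
Proof.
case: hmeas => mr _ _; apply: measurable_prod => h _.
by case: (t h).2 => [r|]; [exact: mr|exact: measurable_cst].
Qed.

Lemma measurable_ledLik l : measurable_fun setT (fun m => ledLik (mdl m) l).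
Proof.
apply: measurable_funM; first exact: measurable_cst.
apply: measurable_prod => e _.
exact: measurable_funM (measurable_saLik _ _) (measurable_rewE _).
Qed.

Hypotheses (hC : countable C) (hC01 : C `<=` [set r | 0 <= r <= 1]).
Hypothesis hvalid : forall m, valid_mdp C (mdl m).

(* Enumerating the countable support C turns the mean reward into a series of
   measurable functions. *)
Lemma measurable_rmean x a h : measurable_fun setT (fun m => rmean C (mdl m) x a h).
Proof.
case: hmeas => mr _ _; have /countable_injP[f finj] := hC.
pose J : pred nat := fun n => `[< exists2 r, C r & f r = n >].
pose e : nat -> R := fun n => xget 0 [set r | C r /\ f r = n].
have eJ n : J n -> C (e n) /\ f (e n) = n.
  move=> /asboolP[r Cr frn].
  exact: (@xgetPex _ 0 [set r | C r /\ f r = n] (ex_intro _ r (conj Cr frn))).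
have Ce : C = e @` [set n | J n].
  apply/seteqP; split => [r Cr|_ [n Jn <-]]; last by case: (eJ n Jn).
  have Jfr : J (f r) by apply/asboolP; exists r.
  by exists (f r) => //; case: (eJ _ Jfr) => Ce fe; apply: finj; rewrite ?inE.
have einj : set_inj [set n | J n] e.
  by move=> n1 n2 /set_mem J1 /set_mem J2 ee; rewrite -(eJ _ J1).2 -(eJ _ J2).2 ee.
have term_ge0 m n : J n -> (0 <= (rewd (mdl m) x a h (e n) * e n)%:E)%E.
  move=> /eJ[/hC01 /andP[en_ge0 _] _]; rewrite lee_fin mulr_ge0 //.
  by case/andP: (rewd_in01 (hvalid m) x a h (e n)).
have rmeanE m : rmean C (mdl m) x a h =
    fine (\sum_(n <oo | n \in J) (rewd (mdl m) x a h (e n) * e n)%:E)%E.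
  by rewrite /rmean Ce esum_image // nneseries_esum // => n /term_ge0.
under eq_fun do rewrite rmeanE.
apply: measurableT_comp (@fine_measurable R setT measurableT) _.
apply: ge0_emeasurable_sum => [n m _ /term_ge0 //|n _].
by apply/measurable_EFinP; exact: measurable_funM (mr x a h (e n)) (measurable_cst _).
Qed.

Lemma measurable_Vm pi : measurable_fun setT (Vm C mdl pi).
Proof.
apply: measurable_sum => xs; apply: measurable_funM; first exact: measurable_saLik.
by apply: measurable_sum => h; exact: measurable_rmean.
Qed.

End Measurability.

Section LedgerLikelihood.
Variables (R : realType) (S A H : nat) (m : mdp R S A H).

Lemma ledLik_censOf (hs : hist S A H) :
  ledLik m (censOf R hs) = \prod_(e <- hs) saLik m e.1 e.2.
Proof.
have wf_cens : wf (censOf R hs).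
  by apply/allP => _ /mapP[e _ ->]; apply/forallP => h /=; rewrite ffunE finset.in_setT.
rewrite /ledLik wf_cens mul1r big_map; apply: eq_bigr => e _ /=.
have -> : saOf ([ffun h => (e.2 h, None)] : traj R S A H) = e.2.
  by apply/ffunP => h; rewrite !ffunE.
by rewrite /rewE big1 ?mulr1 // => h _; rewrite ffunE.
Qed.

Lemma ledLik_histOf (l : ledger R S A H) :
  ledLik m l = ledLik m (censOf R (histOf l)) *
     ((wf l)%:R * \prod_(e <- lent l) rewE m e.2).
Proof. by rewrite ledLik_censOf /ledLik big_map big_split /=; ring. Qed.

End LedgerLikelihood.

Section HistoryLikelihood.
Variables (R : realType) (S A H : nat) (d : measure_display) (M : measurableType d).
Variables (P : probability M R) (C : set R) (mdl : M -> mdp R S A H).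
Variables (N nl : nat) (eps : R) (sel : nat -> ledger R S A H -> policy S A H -> R).

Fixpoint chooseLik (pre rest : hist S A H) : R :=
  if rest is e :: rest' then
    Defs.chooseP P C mdl N nl eps sel (size pre).+1 pre e.1 * chooseLik (rcons pre e) rest'
  else 1.

Lemma histLikAuxE m pre rest :
  histLikAux P C mdl N nl eps sel m pre rest =
  chooseLik pre rest * \prod_(e <- rest) saLik (mdl m) e.1 e.2.
Proof.
elim: rest pre => [|e rest IH] pre /=; first by rewrite big_nil mulr1.
by rewrite IH big_cons; ring.
Qed.

Lemma histLikE m hs :
  histLik P C mdl N nl eps sel m hs = chooseLik [::] hs * ledLik (mdl m) (censOf R hs).
Proof. by rewrite /histLik histLikAuxE ledLik_censOf. Qed.

End HistoryLikelihood.

Section ProbabilityIntegrals.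
Variables (R : realType) (d : measure_display) (M : measurableType d).
Variable P : probability M R.

Lemma bounded_integrable (f : M -> R) (K : R) : measurable_fun setT f ->
  (forall m, 0 <= f m <= K) -> P.-integrable setT (EFin \o f).
Proof.
move=> mf f0K; apply: measurable_bounded_integrable => //.
  by rewrite [X in (X < _)%E]probability_setT ltry.
exists K; split; first exact: num_real.
move=> x Kx y _ /=; case/andP: (f0K y) => f0 fK.
by rewrite ger0_norm // (le_trans fK) // ltW.
Qed.

Lemma Rintegral_lincomb (a b : R) (f g : M -> R) :
  P.-integrable setT (EFin \o f) -> P.-integrable setT (EFin \o g) ->
  Rintegral P setT (fun m => a * f m + b * g m) =
  a * Rintegral P setT f + b * Rintegral P setT g.
Proof.
have intZ c h : P.-integrable setT (EFin \o h) ->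
    P.-integrable setT (EFin \o (fun m => c * h m)).
  move=> ih; rewrite (_ : _ \o _ = fun m => c%:E * (EFin \o h) m)%E.
    exact: integrableZl.
  by apply/funext => m /=; rewrite EFinM.
by move=> fi gi; rewrite RintegralD ?intZ // !RintegralZl.
Qed.

Lemma integral_subset_le (E : set M) (f : M -> R) : (forall m, 0 <= f m) ->
  (\int[P]_(m in E) (f m)%:E <= \int[P]_(m in setT) (f m)%:E)%E.
Proof.
move=> f0; rewrite !ge0_integralE => [|m _|m _]; rewrite ?lee_fin //.
apply: le_ereal_sup => _ [h hf <-]; exists h => // x.
apply: le_trans (hf x) _; rewrite patch_setT /patch; case: ifP => _ //.
by rewrite lee_fin.
Qed.

Lemma fine_integral_subset (E : set M) (f : M -> R) : (forall m, 0 <= f m) ->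
  P.-integrable setT (EFin \o f) ->
  0 <= fine (\int[P]_(m in E) (f m)%:E) <= fine (\int[P]_(m in setT) (f m)%:E).
Proof.
move=> f0 fi; have E_le_T := integral_subset_le E f0.
have E_ge0 : (0 <= \int[P]_(m in E) (f m)%:E)%E.
  by apply: integral_ge0 => m _; rewrite lee_fin.
have T_fin := integrable_fin_num measurableT fi.
rewrite fine_ge0 //= fine_le //.
by rewrite ge0_fin_numE // (le_lt_trans E_le_T) // -ge0_fin_numE // (le_trans E_ge0).
Qed.

Lemma Rintegral_weighted_in0K (f L : M -> R) (K : R) :
  measurable_fun setT f -> measurable_fun setT L ->
  (forall m, 0 <= f m <= K) -> (forall m, 0 <= L m <= 1) ->
  0 <= Rintegral P setT (fun m => f m * L m) <= K * Rintegral P setT L.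
Proof.
move=> mf mL f0K L01.
have fL0K m : 0 <= f m * L m <= K by exact: mulr_in0K.
rewrite Rintegral_ge0 => [/=|m _]; last by case/andP: (fL0K m).
rewrite -RintegralZl //; last exact: bounded_integrable mL L01.
apply: le_Rintegral => // [||m _].
- exact: bounded_integrable (measurable_funM mf mL) fL0K.
- apply: (bounded_integrable (f := fun m => K * L m) (K := K)) => [|m].
    exact: measurable_funM (measurable_cst K) mL.
  have K0 : 0 <= K by case/andP: (f0K m) => f0; exact: le_trans.
  by case/andP: (L01 m) => L0 L1; apply/andP; split; [exact: mulr_ge0|exact: ler_piMr].
- by case/andP: (L01 m) => L0 _; rewrite ler_wpM2r //; case/andP: (f0K m).
Qed.

End ProbabilityIntegrals.

Section MixtureArithmetic.
Variable R : realFieldType.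

(* Multiplying by ZEc / (Zc Zl) turns the unnormalised values a, a' into the
   expectations a / Zl, a' / Zl, and the weight ZEl / ZEc into ZEl / Zl <= 1. *)
Lemma mixture_gap_bound (n ZEl Zl ZEc Zc Hh a a' b b' : R) :
  0 <= n -> n <= 1 -> 0 < ZEl -> ZEl <= Zl -> 0 < ZEc -> ZEc <= Zc ->
  0 <= Hh -> 0 <= b -> b' <= Hh * Zc ->
  (1 - n) * a + n * (ZEl / ZEc) * b <= (1 - n) * a' + n * (ZEl / ZEc) * b' ->
  (1 - n) * (ZEc / Zc) * (a / Zl - a' / Zl) <= n * Hh.
Proof.
move=> n0 n1 El0 ElL Ec0 EcC Hh0 b0 b'_le mix_le.
have [Zl0 Zc0] : 0 < Zl /\ 0 < Zc.
  by split; [exact: lt_le_trans ElL|exact: lt_le_trans EcC].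
have nr0 : 0 <= n * (ZEl / ZEc) by rewrite mulr_ge0 // divr_ge0 // ltW.
have key : (1 - n) * (a - a') <= n * (ZEl / ZEc) * (Hh * Zc).
  have := mulr_ge0 nr0 b0; have := ler_wpM2l nr0 b'_le; lra.
have q0 : 0 <= ZEc / (Zc * Zl) by rewrite divr_ge0 // ?ltW // mulr_gt0.
have -> : (1 - n) * (ZEc / Zc) * (a / Zl - a' / Zl) =
    ZEc / (Zc * Zl) * ((1 - n) * (a - a')).
  by field; rewrite !gt_eqF.
apply: le_trans (ler_wpM2l q0 key) _.
have -> : ZEc / (Zc * Zl) * (n * (ZEl / ZEc) * (Hh * Zc)) = n * Hh * (ZEl / Zl).
  by field; rewrite !gt_eqF.
by rewrite ler_piMr ?mulr_ge0 // ler_pdivrMr // mul1r.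
Qed.

Lemma gap_contradiction (n p g Hh : R) :
  0 < n <= 1 -> 0 < Hh -> 0 <= p <= 1 -> g <= Hh ->
  (1 - n) * p * g <= n * Hh -> n <= p * g * (3 * Hh)^-1 -> False.
Proof.
move=> /andP[n0 n1] Hh0 /andP[p0 p1] gH step.
have pgH : p * g <= Hh.
  have [g0|g_lt0] := leP 0 g; first exact: le_trans (ler_piMl g0 p1) gH.
  exact: le_trans (mulr_ge0_le0 p0 (ltW g_lt0)) (ltW Hh0).
rewrite ler_pdivlMr ?mulr_gt0 // => hyp.
have := ler_wpM2l (ltW n0) pgH; have := mulr_gt0 n0 Hh0; lra.
Qed.

End MixtureArithmetic.

Section HiddenHallucination.
Variables (R : realType) (S A H : nat) (d : measure_display) (M : measurableType d).
Variables (P : probability M R) (C : set R) (mdl : M -> mdp R S A H).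
Hypotheses (hvalid : forall m, valid_mdp C (mdl m)) (hmeas : mdl_measurable mdl).
Hypotheses (hC : countable C) (hC01 : C `<=` [set r | 0 <= r <= 1]) (HH : (0 < H)%N).

Lemma integrable_ledLik l : P.-integrable setT (EFin \o fun m => ledLik (mdl m) l).
Proof.
by apply: bounded_integrable (measurable_ledLik hmeas l) _ => m; exact: ledLik_in01.
Qed.

Lemma integrable_Vm_ledLik pi l :
  P.-integrable setT (EFin \o fun m => Vm C mdl pi m * ledLik (mdl m) l).
Proof.
apply: (@bounded_integrable _ _ _ P _ H%:R).
  exact: measurable_funM (measurable_Vm hmeas hC hC01 hvalid pi) (measurable_ledLik hmeas l).
by move=> m; apply: mulr_in0K; [exact: value_in0H|exact: ledLik_in01].
Qed.

Lemma Vm_ledLik_in0H pi l :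
  0 <= Rintegral P setT (fun m => Vm C mdl pi m * ledLik (mdl m) l)
    <= H%:R * Rintegral P setT (fun m => ledLik (mdl m) l).
Proof.
apply: Rintegral_weighted_in0K => [||m|m].
- exact: measurable_Vm.
- exact: measurable_ledLik.
- exact: value_in0H.
- exact: ledLik_in01.
Qed.

Lemma evidence_subset E l :
  0 <= fine (\int[P]_(m in E) (ledLik (mdl m) l)%:E)
    <= Rintegral P setT (fun m => ledLik (mdl m) l).
Proof.
apply: fine_integral_subset (integrable_ledLik l) => m.
by case/andP: (ledLik_in01 (hvalid m) l).
Qed.

Lemma canE_Vm_in0H pi l : 0 <= canE P mdl (Vm C mdl pi) setT l <= H%:R.
Proof.
apply: divr_in0K (Vm_ledLik_in0H pi l) => //.
by apply: Rintegral_ge0 => m _; case/andP: (ledLik_in01 (hvalid m) l).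
Qed.

Lemma canPr_in01 E l : 0 <= canPr P mdl E l <= 1.
Proof.
have /andP[Z_E0 Z_EZ] := evidence_subset E l.
by apply: divr_in0K; rewrite ?ler01 ?mul1r ?Z_E0 ?(le_trans Z_E0).
Qed.

Lemma gap_can_witness (Pi : {set policy S A H}) l pi :
  pi \notin Pi -> (0 < gap_can P C mdl Pi l)%E ->
  exists2 i, i \in Pi & (gap_can P C mdl Pi l <=
    (canE P mdl (Vm C mdl i) setT l - canE P mdl (Vm C mdl pi) setT l)%:E)%E.
Proof.
rewrite /gap_can => pi_notin.
have [->|[j jPi]] := set_0Vmem Pi; first by rewrite big_set0 addNye.
have [i iPi ->] := eq_bigmax (x := -oo%E) j (fun i => i \in Pi)
  (fun i => (canE P mdl (Vm C mdl i) setT l)%:E) jPi (fun i _ => leNye _).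
move=> _; exists i => //; rewrite EFinB leeB //.
by apply: le_bigmax_cond; rewrite finset.in_setC.
Qed.

Variables (N nl : nat) (eps : R) (sel : nat -> ledger R S A H -> policy S A H -> R).
Hypothesis hN : (0 < N)%N.
Variables (l : nat) (lam : ledger R S A H).

Let hs := histOf lam.
Let Lhon m := ledLik (mdl m) lam.
Let Lcens m := ledLik (mdl m) (censOf R hs).
Let Epl := Epun C mdl eps (Uset nl hs).
Let ZEhon := fine (\int[P]_(m in Epl) (Lhon m)%:E).
Let ZEcens := fine (\int[P]_(m in Epl) (Lcens m)%:E).
Let Zhon := Rintegral P setT Lhon.
Let Zcens := Rintegral P setT Lcens.
Let Vhon pi := Rintegral P setT (fun m => Vm C mdl pi m * Lhon m).
Let Vcens pi := Rintegral P setT (fun m => Vm C mdl pi m * Lcens m).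
Let n : R := N%:R^-1.
Let sig m := sigLik P C mdl N nl eps sel l lam m.
(* [weight] collects the factors of the signal likelihoods that do not depend
   on the model; [ZEhon / ZEcens] is the normalisation of the punished
   posterior in [halP]. *)
Let weight := ((size (lent lam) == l.-1) && (lU lam == Uset nl hs))%:R *
              chooseLik P C mdl N nl eps sel [::] hs.

Let n_in01 : 0 < n <= 1.
Proof. by rewrite invr_gt0 ltr0n hN /= invf_le1 ?ler1n ?ltr0n. Qed.

Lemma honSigPE m : honSigP P C mdl N nl eps sel l lam m = weight * Lhon m.
Proof. by rewrite /honSigP histLikE /Lhon [ledLik _ lam]ledLik_histOf /weight; ring. Qed.

Lemma halSigPE m :
  halSigP P C mdl N nl eps sel l lam m = weight * (ZEhon / ZEcens) * Lcens m.
Proof.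
rewrite /halSigP /halP histLikE eqxx /= /weight -mulnb natrM.
by rewrite /ZEhon /ZEcens /Lhon /Lcens /Epl /hs; ring.
Qed.

Lemma post_mixture k pi : phaseOf N k = l ->
  post P C mdl N nl eps sel k lam pi =
  (weight * ((1 - n) * Vhon pi + n * (ZEhon / ZEcens) * Vcens pi)) /
  (weight * ((1 - n) * Zhon + n * (ZEhon / ZEcens) * Zcens)).
Proof.
move=> phase.
have num m : Vm C mdl pi m * sig m =
    weight * (1 - n) * (Vm C mdl pi m * Lhon m) +
    weight * n * (ZEhon / ZEcens) * (Vm C mdl pi m * Lcens m).
  by rewrite /sig /sigLik honSigPE halSigPE -/n; ring.
have den m : sig m =
    weight * (1 - n) * Lhon m + weight * n * (ZEhon / ZEcens) * Lcens m.
  by rewrite /sig /sigLik honSigPE halSigPE -/n; ring.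
have -> : post P C mdl N nl eps sel k lam pi =
    Rintegral P setT (fun m => Vm C mdl pi m * sig m) / Rintegral P setT (fun m => sig m).
  by rewrite /post phase.
rewrite (eq_Rintegral _ (fun m _ => num m)) (eq_Rintegral _ (fun m _ => den m)).
rewrite !Rintegral_lincomb ?integrable_ledLik ?integrable_Vm_ledLik //.
by rewrite /Vhon /Vcens /Zhon /Zcens; congr (_ / _); ring.
Qed.

Hypothesis hal_evidence : 0 < Rintegral P setT (halSigP P C mdl N nl eps sel l lam).

Lemma hal_evidence_pos : [/\ 0 < weight, 0 < ZEhon & 0 < ZEcens].
Proof.
have /andP[Ehon0 Ehon_le] := evidence_subset Epl lam.
have /andP[Ecens0 Ecens_le] := evidence_subset Epl (censOf R hs).
have ratio0 : 0 <= ZEhon / ZEcens by rewrite divr_ge0.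
move: hal_evidence; rewrite (eq_Rintegral _ (fun m _ => halSigPE m)).
rewrite RintegralZl ?integrable_ledLik // -mulrA => hal_pos.
have rZ_pos : 0 < ZEhon / ZEcens * Zcens.
  rewrite lt_def (mulr_ge0 ratio0 (le_trans Ecens0 Ecens_le)) andbT.
  by apply: contraTneq hal_pos => ->; rewrite mulr0 ltxx.
split; first by move: hal_pos; rewrite pmulr_lgt0.
- rewrite lt_def Ehon0 andbT; apply: contraTneq rZ_pos => ZE0.
  by rewrite ZE0 mul0r mul0r ltxx.
- rewrite lt_def Ecens0 andbT; apply: contraTneq rZ_pos => ZE0.
  by rewrite ZE0 invr0 mulr0 mul0r ltxx.
Qed.

Lemma bayes_greedy_mixture_le k pi i : phaseOf N k = l ->
  pi \in BG P C mdl N nl eps sel k lam ->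
  (1 - n) * Vhon i + n * (ZEhon / ZEcens) * Vcens i <=
  (1 - n) * Vhon pi + n * (ZEhon / ZEcens) * Vcens pi.
Proof.
move=> phase; rewrite inE => /forallP /(_ i).
have [w_pos Ehon_pos Ecens_pos] := hal_evidence_pos.
have /andP[n_pos n_le1] := n_in01.
have Z_pos : 0 < (1 - n) * Zhon + n * (ZEhon / ZEcens) * Zcens.
  have /andP[_ Ehon_le] := evidence_subset Epl lam.
  have /andP[_ Ecens_le] := evidence_subset Epl (censOf R hs).
  apply: ltr_wpDl.
    by rewrite mulr_ge0 ?subr_ge0 //; exact: le_trans (ltW Ehon_pos) Ehon_le.
  apply: mulr_gt0; first by apply: mulr_gt0 => //; exact: divr_gt0.
  exact: lt_le_trans Ecens_pos Ecens_le.
by rewrite !post_mixture // ler_pM2r ?invr_gt0 ?(mulr_gt0 w_pos Z_pos) // ler_pM2l.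
Qed.

Lemma canE_gap_step k pi i : phaseOf N k = l ->
  pi \in BG P C mdl N nl eps sel k lam ->
  (1 - n) * canPr P mdl Epl (censOf R hs) *
    (canE P mdl (Vm C mdl i) setT lam - canE P mdl (Vm C mdl pi) setT lam) <= n * H%:R.
Proof.
move=> phase pi_BG; have [_ Ehon_pos Ecens_pos] := hal_evidence_pos.
have /andP[_ Ehon_le] := evidence_subset Epl lam.
have /andP[_ Ecens_le] := evidence_subset Epl (censOf R hs).
have /andP[/ltW n_ge0 n_le1] := n_in01.
apply: (mixture_gap_bound (b := Vcens i) (b' := Vcens pi) n_ge0 n_le1
  Ehon_pos Ehon_le Ecens_pos Ecens_le (ler0n _ H)).
- by case/andP: (Vm_ledLik_in0H i (censOf R hs)).
- by case/andP: (Vm_ledLik_in0H pi (censOf R hs)).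
- exact: bayes_greedy_mixture_le phase pi_BG.
Qed.

End HiddenHallucination.

Theorem proposition1 (R : realType) (S A H : nat)
  (d : measure_display) (M : measurableType d) (P : probability M R)
  (C : set R) (mdl : M -> mdp R S A H)
  (HS : (0 < S)%N) (HA : (0 < A)%N) (HH : (0 < H)%N)
  (hC : countable C) (hC01 : C `<=` [set r | 0 <= r <= 1])
  (hvalid : forall m, valid_mdp C (mdl m))
  (hmeas : mdl_measurable mdl)
  (N nl : nat) (eps : R) (hN : (0 < N)%N)
  (sel : nat -> ledger R S A H -> policy S A H -> R)
  (hsel : bayes_greedy_sel P C mdl N nl eps sel)
  (l k : nat) (hl : (0 < l)%N) (hk : (l.-1 * N < k <= l * N)%N)
  (Pi : {set policy S A H}) (lam : ledger R S A H)
  (hreal : 0 < fine (\int[P]_(m in setT)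
                      (halSigP P C mdl N nl eps sel l lam m)%:E)%E)
  (hgap : (((N%:R)^-1)%:E <=
          (canPr P mdl (Epun C mdl eps (Uset nl (histOf lam)))
                 (censOf R (histOf lam)))%:E
          * gap_can P C mdl Pi lam * (((3 * H)%:R)^-1)%:E)%E) :
  forall pi, pi \in BG P C mdl N nl eps sel k lam -> pi \in Pi.
Proof.
move=> pi pi_BG; apply/negPn/negP => pi_notin.
have phase : phaseOf N k = l by rewrite /phaseOf; case/andP: hk => ? ?; nia.
have n_pos : 0 < (N%:R : R)^-1 by rewrite invr_gt0 ltr0n.
have c_ge0 : (0 <= (((3 * H)%:R : R)^-1)%:E)%E by rewrite lee_fin invr_ge0 ler0n.
set p := canPr _ _ _ _ in hgap; have /andP[p_ge0 p_le1] : 0 <= p <= 1 by exact: canPr_in01.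
have gap_pos : (0 < gap_can P C mdl Pi lam)%E.
  rewrite ltNge; apply/negP => gap_le0.
  have : (p%:E * gap_can P C mdl Pi lam * (((3 * H)%:R)^-1)%:E <= 0)%E.
    by rewrite mule_le0_ge0 // mule_ge0_le0.
  by move/(le_trans hgap); rewrite lee_fin leNgt n_pos.
have [i iPi gap_le] := gap_can_witness pi_notin gap_pos.
have step := canE_gap_step hvalid hmeas hC hC01 HH hN hreal i phase pi_BG.
have /andP[_ Ei_le] := canE_Vm_in0H P hvalid hmeas hC hC01 HH i lam.
have /andP[Epi_ge0 _] := canE_Vm_in0H P hvalid hmeas hC hC01 HH pi lam.
apply: (gap_contradiction _ _ _ _ step).
- by rewrite n_pos invf_le1 ?ler1n ?ltr0n.
- by rewrite ltr0n.
- by rewrite p_ge0.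
- lra.
- have := le_trans hgap (lee_wpmul2r c_ge0 (lee_wpmul2l (p_ge0 : 0 <= p%:E)%E gap_le)).
  by rewrite -!EFinM lee_fin natrM.
Qed.
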